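(* For any $k\in\mathbb{Z}_{>0}$ and $i\in\{1,2,3\}$, suppose $\mathrm{S}_{k,i}(x,z)=\tfrac12[x;z]^TQ_{k,i}[x;z]$ and $\mathrm{B}_{k,i}(y,z)=-\tfrac12[y;z]^T\Theta_{k,i}[y;z]$. Then $\Theta_{k,i}=\Gamma^i(Q_{k,i})$ and $Q_{k,i}=\Gamma^i(\Theta_{k,i})$.
   Context: Consider $x_{k+1}=Ax_k+Bw_k$ with $x_k\in\mathbb{R}^n$, $w_k\in\mathbb{R}^m$, running payoff $\tfrac12x^T\Phi x-\tfrac{\gamma^2}{2}|w|^2$, and one-step operator $(\mathcal{S}_1\phi)(x)=\sup_{w}\{\tfrac12x^T\Phi x-\tfrac{\gamma^2}{2}|w|^2+\phi(Ax+Bw)\}$, $\mathcal{S}_{k+1}=\mathcal{S}_1\mathcal{S}_k$. Basis functions: $\psi^1(x,z)=z^Tx$, $\psi^2(x,z)=-\tfrac12(x-z)^TM(x-z)$ ($M=M^T>0$), $\psi^3(x,z)=\delta(x-z)$ ($\delta(0)=0$, $\delta(\xi)=-\infty$ otherwise). Define $\mathrm{S}_{k,i}(x,z)=(\mathcal{S}_k\psi^i(\cdot,z))(x)$ and its max-plus dual $\mathrm{B}_{k,i}(y,z)=-\sup_{x\in\mathbb{R}^n}\{\psi^i(x,y)-\mathrm{S}_{k,i}(x,z)\}$, so that $\mathrm{S}_{k,i}(x,z)=\sup_y\{\psi^i(x,y)+\mathrm{B}_{k,i}(y,z)\}$. For a symmetric block matrix $Q=\begin{bmatrix}Q^{11}&Q^{12}\\Q^{21}&Q^{22}\end{bmatrix}\in\mathbb{R}^{2n\times2n}$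 define $\Gamma^1(Q)=\begin{bmatrix}(Q^{11})^{-1}&-(Q^{11})^{-1}Q^{12}\\-Q^{21}(Q^{11})^{-1}&Q^{21}(Q^{11})^{-1}Q^{12}-Q^{22}\end{bmatrix}$ (requires $Q^{11}>0$), $\Gamma^2(Q)=\begin{bmatrix}M(Q^{11}+M)^{-1}M-M&-M(Q^{11}+M)^{-1}Q^{12}\\-Q^{21}(Q^{11}+M)^{-1}M&Q^{21}(Q^{11}+M)^{-1}Q^{12}-Q^{22}\end{bmatrix}$ (requires $Q^{11}+M>0$), $\Gamma^3(Q)=-Q$. One has $\Gamma^i\circ\Gamma^i$ equal to the identity. *)

From HB Require Import structures.
From mathcomp Require Import all_boot all_order all_algebra.
From mathcomp Require Import boolp classical_sets reals constructive_ereal ereal.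
Set Implicit Arguments. Unset Strict Implicit. Unset Printing Implicit Defensive.
Import Order.TTheory GRing.Theory Num.Theory.
Local Open Scope ring_scope.
Local Open Scope classical_set_scope.

Section MaxPlus.
Variable R : realType.

Definition sc (a : 'M[R]_1) : R := a ord0 ord0.

Definition qf (p : nat) (P : 'M[R]_p) (v : 'cV[R]_p) : R := sc (v^T *m P *m v).

Definition posdef (p : nat) (P : 'M[R]_p) : Prop :=
  P^T = P /\ forall v : 'cV[R]_p, v != 0 -> 0 < qf P v.

Definition S1 (n m : nat) (A : 'M[R]_n) (B : 'M[R]_(n, m)) (Phi : 'M[R]_n)
  (gamma : R) (phi : 'cV[R]_n -> \bar R) (x : 'cV[R]_n) : \bar R :=
  ereal_sup [set adde (2^-1 * qf Phi x - gamma ^+ 2 / 2 * sc (w^T *m w))%:E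
                   (phi (A *m x + B *m w)) | w in [set: 'cV[R]_m]].

Definition Sk (n m : nat) (A : 'M[R]_n) (B : 'M[R]_(n, m)) (Phi : 'M[R]_n)
  (gamma : R) (k : nat) (phi : 'cV[R]_n -> \bar R) : 'cV[R]_n -> \bar R :=
  iter k (S1 A B Phi gamma) phi.

Definition psi (n : nat) (M : 'M[R]_n) (i : nat) (x z : 'cV[R]_n) : \bar R :=
  match i with
  | 1%N => (sc (z^T *m x))%:E
  | 2%N => (- (2^-1 * qf M (x - z)))%:E
  | _ => if x - z == 0 then 0%E else (-oo)%E
  end.

Definition Ski (n m : nat) (A : 'M[R]_n) (B : 'M[R]_(n, m)) (Phi : 'M[R]_n)
  (gamma : R) (M : 'M[R]_n) (k i : nat) (x z : 'cV[R]_n) : \bar R :=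
  Sk A B Phi gamma k (fun x' => psi M i x' z) x.

Definition Bki (n m : nat) (A : 'M[R]_n) (B : 'M[R]_(n, m)) (Phi : 'M[R]_n)
  (gamma : R) (M : 'M[R]_n) (k i : nat) (y z : 'cV[R]_n) : \bar R :=
  oppe (ereal_sup [set adde (psi M i x y) (oppe (Ski A B Phi gamma M k i x z))
                | x in [set: 'cV[R]_n]]).

Definition Gamma1 (n : nat) (Q : 'M[R]_(n + n)) : 'M[R]_(n + n) :=
  let Q11 := ulsubmx Q in let Q12 := ursubmx Q in
  let Q21 := dlsubmx Q in let Q22 := drsubmx Q in
  block_mx (invmx Q11) (- (invmx Q11 *m Q12))
           (- (Q21 *m invmx Q11)) (Q21 *m invmx Q11 *m Q12 - Q22).

Definition Gamma2 (n : nat) (M : 'M[R]_n) (Q : 'M[R]_(n + n)) : 'M[R]_(n + n) :=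
  let Q11 := ulsubmx Q in let Q12 := ursubmx Q in
  let Q21 := dlsubmx Q in let Q22 := drsubmx Q in
  block_mx (M *m invmx (Q11 + M) *m M - M) (- (M *m invmx (Q11 + M) *m Q12))
           (- (Q21 *m invmx (Q11 + M) *m M)) (Q21 *m invmx (Q11 + M) *m Q12 - Q22).

Definition Gamma3 (n : nat) (Q : 'M[R]_(n + n)) : 'M[R]_(n + n) := - Q.

Definition Gamma (n : nat) (M : 'M[R]_n) (i : nat) (Q : 'M[R]_(n + n)) : 'M[R]_(n + n) :=
  match i with
  | 1%N => Gamma1 Q
  | 2%N => Gamma2 M Q
  | _ => Gamma3 Q
  end.

End MaxPlus.

From HB Require Import structures.
From mathcomp Require Import all_boot all_order all_algebra.
From mathcomp Require Import boolp classical_sets reals constructive_ereal ereal.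
From mathcomp Require Import ring lra.
Set Implicit Arguments. Unset Strict Implicit. Unset Printing Implicit Defensive.
Import Order.TTheory GRing.Theory Num.Theory.
Local Open Scope ring_scope.

(* Once S_{k,i} is the quadratic form of Q, the dual B_{k,i}(y, .) is minus the
   supremum over x of psi^i(x,y) - 1/2 [x;z]^T Q [x;z], so Theta depends only on
   Q and the basis function, never on the dynamics.  For psi^1 and psi^2 this
   supremum is the maximum of a concave quadratic in x: finiteness of the
   supremum for every y forces the Hessian (Q^11, resp. Q^11 + M) to be positive
   semidefinite and invertible, and completing the square yields Gamma^i(Q).
   For psi^3 the supremum is attained at x = y, giving -Q.  Each Gamma^i is an
   involution, which gives the converse identity. *)

Section MaxPlusDuality.
Variable R : realType.
Implicit Types (p : nat) (t : R).

Lemma sc0 : sc (0 : 'M[R]_1) = 0. Proof. by rewrite /sc mxE. Qed.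

Lemma scD (a b : 'M[R]_1) : sc (a + b) = sc a + sc b.
Proof. by rewrite /sc mxE. Qed.

Lemma scN (a : 'M[R]_1) : sc (- a) = - sc a.
Proof. by rewrite /sc mxE. Qed.

Lemma scB (a b : 'M[R]_1) : sc (a - b) = sc a - sc b.
Proof. by rewrite scD scN. Qed.

Lemma scZ t (a : 'M[R]_1) : sc (t *: a) = t * sc a.
Proof. by rewrite /sc mxE. Qed.

Lemma sc_tr (a : 'M[R]_1) : sc a^T = sc a.
Proof. by rewrite /sc mxE. Qed.

Lemma sc_trmx_mul p (P : 'M[R]_p) (u v : 'cV[R]_p) :
  sc (u^T *m P^T *m v) = sc (v^T *m P *m u).
Proof. by rewrite -sc_tr !trmx_mul !trmxK mulmxA. Qed.

Lemma sc_sym p (P : 'M[R]_p) (u v : 'cV[R]_p) : P^T = P ->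
  sc (u^T *m P *m v) = sc (v^T *m P *m u).
Proof. by move=> hP; rewrite -[in LHS]hP sc_trmx_mul. Qed.

Lemma qf0 p (P : 'M[R]_p) : qf P 0 = 0.
Proof. by rewrite /qf mulmx0 sc0. Qed.

Lemma qfZ p (P : 'M[R]_p) t v : qf P (t *: v) = t ^+ 2 * qf P v.
Proof.
by rewrite /qf linearZ /= [(t *: v)^T]linearZ /= -!scalemxAl !scZ mulrA expr2.
Qed.

Lemma qfDl p (P1 P2 : 'M[R]_p) v : qf (P1 + P2) v = qf P1 v + qf P2 v.
Proof. by rewrite /qf mulmxDr mulmxDl scD. Qed.

Lemma qfBl p (P1 P2 : 'M[R]_p) v : qf (P1 - P2) v = qf P1 v - qf P2 v.
Proof. by rewrite /qf mulmxBr mulmxBl scB. Qed.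

Lemma qfNl p (P : 'M[R]_p) v : qf (- P) v = - qf P v.
Proof. by rewrite /qf mulmxN mulNmx scN. Qed.

Lemma qfB p (P : 'M[R]_p) (u v : 'cV[R]_p) : P^T = P ->
  qf P (u - v) = qf P u - 2 * sc (u^T *m P *m v) + qf P v.
Proof.
move=> hP; rewrite /qf mulmxBr [(u - v)^T]raddfB /= !mulmxBl !scB.
by rewrite (sc_sym v u hP); ring.
Qed.

Lemma qf_block p (a b c d : 'M[R]_p) (y z : 'cV[R]_p) :
  qf (block_mx a b c d) (col_mx y z) =
  qf a y + sc (y^T *m b *m z) + sc (z^T *m c *m y) + qf d z.
Proof.
by rewrite /qf tr_col_mx mul_row_block mul_row_col !mulmxDl !scD; ring.
Qed.

(* Polarization at e_i - e_j. *)
Lemma sym_qf_inj p (P1 P2 : 'M[R]_p) : P1^T = P1 -> P2^T = P2 ->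
  (forall v, qf P1 v = qf P2 v) -> P1 = P2.
Proof.
move=> h1 h2 hq; apply/eqP; rewrite -subr_eq0; apply/eqP.
have hP : (P1 - P2)^T = P1 - P2 by rewrite linearB /= h1 h2.
have q0 v : qf (P1 - P2) v = 0 by rewrite qfBl hq subrr.
move: (P1 - P2) hP q0 => P hP q0; apply/matrixP => i j; rewrite [RHS]mxE.
set u : 'cV[R]_p := delta_mx i 0; set w : 'cV[R]_p := delta_mx j 0.
have -> : P i j = sc (u^T *m P *m w) by rewrite trmx_delta -rowE -colE /sc !mxE.
have := q0 (u - w); rewrite qfB // !q0 => /eqP.
by rewrite add0r addr0 oppr_eq0 mulf_eq0 pnatr_eq0 => /eqP.
Qed.

Lemma sym_qf_col_inj p (P1 P2 : 'M[R]_(p + p)) : P1^T = P1 -> P2^T = P2 ->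
  (forall y z, qf P1 (col_mx y z) = qf P2 (col_mx y z)) -> P1 = P2.
Proof. by move=> h1 h2 h; apply: sym_qf_inj => // v; rewrite -[v]vsubmxK h. Qed.

Lemma sym_block_mx p (Q : 'M[R]_(p + p)) : Q^T = Q ->
  exists a b d, [/\ Q = block_mx a b b^T d, a^T = a & d^T = d].
Proof.
move=> hQ; exists (ulsubmx Q), (ursubmx Q), (drsubmx Q).
have := hQ; rewrite -{1 2}[Q]submxK tr_block_mx => /eq_block_mx [-> _ -> ->].
by split; rewrite ?submxK.
Qed.

Lemma ker_nonunit p (P : 'M[R]_p) : P \notin unitmx ->
  exists2 d : 'cV[R]_p, d != 0 & P *m d = 0.
Proof.
rewrite unitmxE unitfE negbK -det_tr => /det0P [v v0 vP0].
exists v^T; last by rewrite -[P]trmxK -trmx_mul vP0 trmx0.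
by apply: contra v0 => /eqP h; rewrite -[v]trmxK h trmx0.
Qed.

Lemma sc_dot_gt0 p (d : 'cV[R]_p) : d != 0 -> 0 < sc (d^T *m d).
Proof.
move=> hd; rewrite /sc mxE; under eq_bigr do rewrite mxE -expr2.
rewrite lt0r sumr_ge0 ?andbT => [|k _]; last exact: sqr_ge0.
apply: contra hd => /eqP /psumr_eq0P h; apply/eqP/matrixP => k l.
have /eqP := h (fun k _ => sqr_ge0 _) k isT.
by rewrite sqrf_eq0 (ord1 l) mxE => /eqP.
Qed.

Lemma posdef_unitmx p (M : 'M[R]_p) : posdef M -> M \in unitmx.
Proof.
move=> [_ hM]; apply/negPn/negP => /ker_nonunit [v hv hMv].
by have := hM v hv; rewrite /qf -mulmxA hMv mulmx0 sc0 ltxx.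
Qed.

Lemma invmx_mul p (U V : 'M[R]_p) : U \in unitmx -> V \in unitmx ->
  invmx (U *m V) = invmx V *m invmx U.
Proof.
move=> hU hV; have hW : U *m V \in unitmx by rewrite unitmx_mul hU hV.
rewrite -[RHS]mul1mx -(mulVmx hW) -!mulmxA (mulmxA V) mulmxV // mul1mx.
by rewrite mulmxV // mulmx1.
Qed.

Lemma ereal_sup_attained (T : Type) (f : T -> \bar R) (v : \bar R) (x0 : T) :
  (forall x, (f x <= v)%E) -> f x0 = v ->
  ereal_sup [set f x | x in [set: T]] = v.
Proof.
move=> hle h0; apply/eqP; rewrite eq_le; apply/andP; split.
  by apply: ge_ereal_sup => _ [x _ <-].
by apply: ereal_sup_ubound; exists x0.
Qed.

Section ConcaveQuadratic.
Variables (p : nat) (P : 'M[R]_p).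

Definition conj_bounded :=
  forall b : 'cV[R]_p, exists c, forall x, sc (b^T *m x) - 2^-1 * qf P x <= c.

Lemma conj_bounded_psd : conj_bounded -> forall d, 0 <= qf P d.
Proof.
move=> hbd d; have [c hc] := hbd 0; rewrite leNgt; apply/negP => hd.
have [u hdu hu] : exists2 u, qf P d = - u & 0 < u.
  by exists (- qf P d); rewrite ?opprK ?oppr_gt0.
(* Along t *: d the objective is t^2 u / 2, which exceeds c once t >= 1 and t u > 2 |c|. *)
set t := 2 * (`|c| + 1) / u + 1.
have ht1 : 1 <= t by rewrite lerDr divr_ge0 ?ltW.
have htu : t * u = 2 * (`|c| + 1) + u by rewrite mulrDl divfK ?mul1r ?gt_eqF.
have htt : t * u <= t ^+ 2 * u.
  by rewrite expr2 -mulrA ler_peMl // mulr_ge0 ?(le_trans ler01 ht1) ?ltW.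
have := hc (t *: d); rewrite trmx0 mul0mx sc0 sub0r qfZ hdu.
have := ler_norm c; lra.
Qed.

Lemma conj_bounded_unitmx : conj_bounded -> P \in unitmx.
Proof.
move=> hbd; apply/negPn/negP => /ker_nonunit [d hd0 hPd].
(* Along the kernel direction d the quadratic term vanishes and the linear one is unbounded. *)
have [c hc] := hbd d; have hs := sc_dot_gt0 hd0.
have := hc (((`|c| + 1) / sc (d^T *m d)) *: d).
have -> : qf P (((`|c| + 1) / sc (d^T *m d)) *: d) = 0.
  by rewrite qfZ /qf -mulmxA hPd mulmx0 sc0 mulr0.
rewrite mulr0 subr0 -scalemxAr scZ divfK ?gt_eqF //.
have := ler_norm c; lra.
Qed.

Hypotheses (hP : P^T = P) (hU : P \in unitmx).

Lemma complete_square (b x : 'cV[R]_p) :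
  sc (b^T *m x) - 2^-1 * qf P x =
  2^-1 * qf (invmx P) b - 2^-1 * qf P (x - invmx P *m b).
Proof.
have -> : b = P *m (invmx P *m b) by rewrite mulKVmx.
move: (invmx P *m b) => y; rewrite mulKmx // qfB // trmx_mul hP.
have -> : qf (invmx P) (P *m y) = qf P y.
  by rewrite /qf trmx_mul hP -!mulmxA (mulmxA P) mulmxV // mul1mx.
by rewrite (sc_sym x y hP); field.
Qed.

Lemma ereal_sup_concave_quad (b : 'cV[R]_p) (r : R) :
  (forall d, 0 <= qf P d) ->
  ereal_sup [set (sc (b^T *m x) - 2^-1 * qf P x + r)%:E | x in [set: 'cV[R]_p]]
  = (2^-1 * qf (invmx P) b + r)%:E.
Proof.
move=> hpsd; apply: ereal_sup_attained (invmx P *m b) _ _.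
  move=> x; rewrite lee_fin lerD2r complete_square gerBl.
  by rewrite mulr_ge0 ?invr_ge0 ?ler0n.
by rewrite complete_square subrr qf0 mulr0 subr0.
Qed.

End ConcaveQuadratic.

Lemma sup_finite_conj_bounded p (P : 'M[R]_p) :
  (forall b : 'cV[R]_p, exists r v, ereal_sup
     [set (sc (b^T *m x) - 2^-1 * qf P x + r)%:E | x in [set: 'cV[R]_p]] = v%:E) ->
  conj_bounded P.
Proof.
move=> hfin b; have [r [v hv]] := hfin b; exists (v - r) => x.
have : ((sc (b^T *m x) - 2^-1 * qf P x + r)%:E <= v%:E)%E.
  by rewrite -hv; apply: ereal_sup_ubound; exists x.
by rewrite lee_fin; lra.
Qed.

Lemma Gamma1_block p (a b c d : 'M[R]_p) :
  Gamma1 (block_mx a b c d) =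
  block_mx (invmx a) (- (invmx a *m b)) (- (c *m invmx a)) (c *m invmx a *m b - d).
Proof. by rewrite /Gamma1 block_mxKul block_mxKur block_mxKdl block_mxKdr. Qed.

Lemma Gamma1K p (Q : 'M[R]_(p + p)) : ulsubmx Q \in unitmx -> Gamma1 (Gamma1 Q) = Q.
Proof.
rewrite -[Q]submxK block_mxKul.
move: (ulsubmx Q) (ursubmx Q) (dlsubmx Q) (drsubmx Q) => a b c d ha.
rewrite !Gamma1_block invmxK; congr block_mx.
- by rewrite mulmxN opprK mulmxA mulmxV // mul1mx.
- by rewrite mulNmx mulmxKV // opprK.
- by rewrite mulNmx mulmxN mulmxKV // mulNmx opprK mulmxA opprB addrC subrK.
Qed.

Lemma Gamma2_block p (M a b c d : 'M[R]_p) :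
  Gamma2 M (block_mx a b c d) =
  block_mx (M *m invmx (a + M) *m M - M) (- (M *m invmx (a + M) *m b))
           (- (c *m invmx (a + M) *m M)) (c *m invmx (a + M) *m b - d).
Proof. by rewrite /Gamma2 block_mxKul block_mxKur block_mxKdl block_mxKdr. Qed.

Lemma Gamma2K p (M : 'M[R]_p) (Q : 'M[R]_(p + p)) :
  M \in unitmx -> ulsubmx Q + M \in unitmx -> Gamma2 M (Gamma2 M Q) = Q.
Proof.
move=> hM; rewrite -[Q]submxK block_mxKul.
move: (ulsubmx Q) (ursubmx Q) (dlsubmx Q) (drsubmx Q) => a b c d hP.
have hiP : invmx (a + M) \in unitmx by rewrite unitmx_inv.
have hMiP : M *m invmx (a + M) \in unitmx by rewrite unitmx_mul hM hiP.
rewrite !Gamma2_block subrK invmx_mul // invmx_mul // invmxK.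
congr block_mx.
- by rewrite mulKVmx // -mulmxA mulVmx // mulmx1 addrK.
- by rewrite mulmxN opprK mulKVmx // !mulmxA mulmxKV // mulmxV // mul1mx.
- by rewrite !mulNmx opprK !mulmxA mulmxK // mulmxKV // mulmxKV.
- rewrite mulNmx mulmxN !mulmxA !mulNmx opprK mulmxK // mulmxKV // mulmxKV //.
  by rewrite opprB addrC subrK.
Qed.

Definition maxplus_conj p (phi : 'cV[R]_p -> 'cV[R]_p -> \bar R)
  (Q : 'M[R]_(p + p)) (y z : 'cV[R]_p) : \bar R :=
  ereal_sup [set (phi x y + (- (2^-1 * qf Q (col_mx x z)))%:E)%E
            | x in [set: 'cV[R]_p]].

Lemma Bki_quad n m (A : 'M[R]_n) (B : 'M[R]_(n, m)) (Phi : 'M[R]_n) (gamma : R)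
    (M : 'M[R]_n) (k i : nat) (Q : 'M[R]_(n + n)) :
  (forall x z, Ski A B Phi gamma M k i x z = (2^-1 * qf Q (col_mx x z))%:E) ->
  forall y z, Bki A B Phi gamma M k i y z = (- maxplus_conj (psi M i) Q y z)%E.
Proof.
move=> HS y z; rewrite /Bki /maxplus_conj; congr (- ereal_sup _)%E.
by apply: eq_imagel => x _; rewrite HS.
Qed.

Lemma maxplus_conj_psi1 p (M : 'M[R]_p) (Q Th : 'M[R]_(p + p)) :
  Q^T = Q -> Th^T = Th ->
  (forall y z, maxplus_conj (psi M 1) Q y z = (2^-1 * qf Th (col_mx y z))%:E) ->
  Th = Gamma1 Q /\ Q = Gamma1 Th.
Proof.
move=> /sym_block_mx [a [b [d [-> ha hd]]]] hT H.
have hsup y z : ereal_sup [set (sc ((y - b *m z)^T *m x) - 2^-1 * qf a x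
    + - (2^-1 * qf d z))%:E | x in [set: 'cV[R]_p]] = (2^-1 * qf Th (col_mx y z))%:E.
  rewrite -H /maxplus_conj; congr ereal_sup; apply: eq_imagel => x _ /=; congr EFin.
  by rewrite qf_block raddfB /= mulmxBl scB trmx_mul sc_trmx_mul; field.
have hbd : conj_bounded a.
  apply: sup_finite_conj_bounded => y.
  by exists (- (2^-1 * qf d 0)), (2^-1 * qf Th (col_mx y 0)); rewrite -hsup mulmx0 subr0.
have [hpsd hU] := (conj_bounded_psd hbd, conj_bounded_unitmx hbd).
have hq y z : qf Th (col_mx y z) = qf (invmx a) (y - b *m z) - qf d z.
  by move: (hsup y z); rewrite ereal_sup_concave_quad // => -[]; lra.
have hia : (invmx a)^T = invmx a by rewrite trmx_inv ha.
have hTh : Th = Gamma1 (block_mx a b b^T d).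
  apply: sym_qf_col_inj => //.
    rewrite Gamma1_block tr_block_mx !raddfN /= !trmx_mul trmxK hia raddfB /=.
    by rewrite !trmx_mul trmxK hia hd mulmxA.
  move=> y z; rewrite hq Gamma1_block qf_block.
  rewrite /qf mulmxBr [(y - b *m z)^T]raddfB /= trmx_mul !mulmxBl !mulmxBr.
  by rewrite !mulmxN !mulNmx !mulmxA !scB !scN mulmxBl scB; ring.
by split => //; rewrite hTh Gamma1K // block_mxKul.
Qed.

Lemma maxplus_conj_psi2 p (M : 'M[R]_p) (Q Th : 'M[R]_(p + p)) :
  posdef M -> Q^T = Q -> Th^T = Th ->
  (forall y z, maxplus_conj (psi M 2) Q y z = (2^-1 * qf Th (col_mx y z))%:E) ->
  Th = Gamma2 M Q /\ Q = Gamma2 M Th.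
Proof.
move=> hMp /sym_block_mx [a [b [d [-> ha hd]]]] hT H.
have [hMs hMU] : M^T = M /\ M \in unitmx by split; [case: hMp | exact: posdef_unitmx].
have hsup y z : ereal_sup [set (sc ((M *m y - b *m z)^T *m x) - 2^-1 * qf (a + M) x
    + (- (2^-1 * qf M y) - 2^-1 * qf d z))%:E | x in [set: 'cV[R]_p]]
    = (2^-1 * qf Th (col_mx y z))%:E.
  rewrite -H /maxplus_conj; congr ereal_sup; apply: eq_imagel => x _ /=; congr EFin.
  by rewrite qf_block qfDl qfB // raddfB /= mulmxBl scB !trmx_mul !sc_trmx_mul; field.
have hbd : conj_bounded (a + M).
  apply: sup_finite_conj_bounded => y.
  exists (- (2^-1 * qf M (invmx M *m y)) - 2^-1 * qf d 0).
  exists (2^-1 * qf Th (col_mx (invmx M *m y) 0)).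
  by rewrite -hsup mulmx0 subr0 mulKVmx.
have [hpsd hU] := (conj_bounded_psd hbd, conj_bounded_unitmx hbd).
have hPs : (a + M)^T = a + M by rewrite raddfD /= ha hMs.
have hq y z : qf Th (col_mx y z) =
    qf (invmx (a + M)) (M *m y - b *m z) - qf M y - qf d z.
  by move: (hsup y z); rewrite ereal_sup_concave_quad // => -[]; lra.
have hiP : (invmx (a + M))^T = invmx (a + M) by rewrite trmx_inv hPs.
have hTh : Th = Gamma2 M (block_mx a b b^T d).
  apply: sym_qf_col_inj => //.
    rewrite Gamma2_block tr_block_mx !raddfN /= !raddfB /= !trmx_mul !trmxK hiP hd hMs.
    by rewrite !mulmxA.
  move=> y z; rewrite hq Gamma2_block qf_block.
  rewrite /qf mulmxBr [(M *m y - b *m z)^T]raddfB /= !trmx_mul hMs !mulmxBl !mulmxBr.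
  by rewrite !mulmxN !mulNmx !mulmxA !scB !scN ?mulmxBl ?mulmxBr ?scB; ring.
by split => //; rewrite hTh Gamma2K // block_mxKul.
Qed.

Lemma maxplus_conj_psi3 p (M : 'M[R]_p) (Q Th : 'M[R]_(p + p)) :
  Q^T = Q -> Th^T = Th ->
  (forall y z, maxplus_conj (psi M 3) Q y z = (2^-1 * qf Th (col_mx y z))%:E) ->
  Th = Gamma3 Q /\ Q = Gamma3 Th.
Proof.
move=> hQ hT H.
have hTh : Th = - Q.
  apply: sym_qf_col_inj => //; first by rewrite raddfN /= hQ.
  move=> y z; rewrite qfNl; move: (H y z); rewrite /maxplus_conj.
  rewrite (@ereal_sup_attained _ _ (- (2^-1 * qf Q (col_mx y z)))%:E y).
  - by move=> [] h; lra.
  - move=> x /=; case: eqP => [/eqP|_]; last exact: leNye.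
    by rewrite subr_eq0 => /eqP ->; rewrite add0e.
  - by rewrite /= subrr eqxx add0e.
by rewrite /Gamma3 hTh opprK.
Qed.

End MaxPlusDuality.

Theorem theorem3p5 (R : realType) (n m : nat) (A : 'M[R]_n) (B : 'M[R]_(n, m))
  (Phi : 'M[R]_n) (gamma : R) (M : 'M[R]_n) (k i : nat)
  (Q Theta : 'M[R]_(n + n)) :
  posdef M ->
  (0 < k)%N -> (1 <= i <= 3)%N ->
  Q^T = Q -> Theta^T = Theta ->
  (forall x z : 'cV[R]_n,
     Ski A B Phi gamma M k i x z = (2^-1 * qf Q (col_mx x z))%:E) ->
  (forall y z : 'cV[R]_n,
     Bki A B Phi gamma M k i y z = (- (2^-1 * qf Theta (col_mx y z)))%:E) ->
  Theta = Gamma M i Q /\ Q = Gamma M i Theta.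
Proof.
move=> hM _ hi hQ hT HS HB.
have hconj y z : maxplus_conj (psi M i) Q y z = (2^-1 * qf Theta (col_mx y z))%:E.
  by apply: oppe_inj; rewrite -(Bki_quad HS) HB.
case: i hi hconj {HS HB} => [|[|[|[|i]]]] // _ hconj.
- exact: (maxplus_conj_psi1 (M := M)).
- exact: maxplus_conj_psi2.
- exact: (maxplus_conj_psi3 (M := M)).
Qed.
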